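(* Under the setting of Lemma 1 (a finite point set $P=\{p_1<\dots<p_n\}\subset\mathbb{R}$, a finite set $S'$ of intervals with no endpoint in $P$ such that each gap $(p_{i-1},p_i)$, $2\le i\le n$, contains an endpoint of some interval of $S'$; $Q_0$ the set of points of $P$ contained in no interval of $S'$; $Q_1,\dots,Q_k$ the sets of at least two points of $P\setminus Q_0$ sharing the same code with respect to $S'$), for a nonempty $Q_i$ let $I(Q_i)$ denote the closed interval from the smallest to the largest point of $Q_i$. Then for any two distinct nonempty sets $Q_i,Q_j$ ($i,j\in\{0,\dots,k\}$), either $I(Q_i)\cap I(Q_j)=\emptyset$, or one of them, say $I(Q_j)$, lies strictly between two consecutive points of the other set $Q_i$ (consecutive in the order of $Q_i$).
   Context: The code of a point $p$ with respect to a set $S'$ of intervals is $\{s\in S': p\in s\}$. *)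

From mathcomp Require Import all_boot all_order all_algebra.
Set Implicit Arguments. Unset Strict Implicit. Unset Printing Implicit Defensive.
Import Order.TTheory GRing.Theory Num.Theory.
Local Open Scope ring_scope.

Section Defs.
Variable R : realFieldType.

(* An interval is encoded by its pair of endpoints (l, r), l < r;
   membership is closed; since no endpoint lies in P, open/closed
   does not matter for points of P. *)
Definition in_itv (s : R * R) (p : R) : bool := (s.1 <= p) && (p <= s.2).

Definition code (S : seq (R * R)) (p : R) : seq (R * R) :=
  [seq s <- S | in_itv s p].

Definition code_class (P : seq R) (S : seq (R * R)) (c : seq (R * R)) : seq R :=
  [seq q <- P | code S q == c].

Definition Q0 (P : seq R) (S : seq (R * R)) : seq R := code_class P S [::].

Definition isQ (P : seq R) (S : seq (R * R)) (Q : seq R) : Prop :=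
  Q = Q0 P S \/
  exists p, [/\ p \in P, code S p != [::], Q = code_class P S (code S p)
               & (2 <= size Q)%N].

Definition in_hull (Q : seq R) (x : R) : Prop :=
  exists a b, [/\ a \in Q, b \in Q & a <= x <= b].

Definition between_consec (Qi Qj : seq R) : Prop :=
  exists a b, [/\ a \in Qi, b \in Qi, a < b,
    (forall q, q \in Qi -> ~ (a < q < b))
  & (forall x, in_hull Qj x -> a < x < b)].

End Defs.

From Pilot Require Import Defs.
From mathcomp Require Import all_boot all_order all_algebra.
Import Order.TTheory GRing.Theory Num.Theory.
Set Implicit Arguments. Unset Strict Implicit. Unset Printing Implicit Defensive.

(* Each of the sets Q_0, ..., Q_k is a code class: the set of
   points of P sharing one code.  Two distinct nonempty classes have
   distinct codes, so some interval s of S' contains every point of one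
   class (call it A) and no point of the other (call it B).  Then
   I(A) is contained in s while B has no point in s.  Either B lies
   entirely on one side of s, and I(A), I(B) are disjoint, or B has points
   on both sides of s; the largest point of B left of s and the smallest
   point of B right of s are then consecutive in B and enclose I(A). *)

Lemma seq_max_exists (disp : Order.disp_t) (T : orderType disp) (s : seq T) :
  s != [::] -> exists2 m, m \in s & forall y, y \in s -> (y <= m)%O.
Proof.
elim: s => [//|h [|h' t] IH] _.
  by exists h => [|y]; rewrite ?mem_head // inE => /eqP ->.
have [m mt Hm] := IH isT.
case: (leP h m) => [hm|mh].
  by exists m => [|y]; rewrite inE ?mt ?orbT // => /orP [/eqP ->|/Hm].
exists h => [|y]; rewrite ?mem_head // inE => /orP [/eqP ->//|/Hm ym].
exact: le_trans ym (ltW mh).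
Qed.

Lemma seq_min_exists (disp : Order.disp_t) (T : orderType disp) (s : seq T) :
  s != [::] -> exists2 m, m \in s & forall y, y \in s -> (m <= y)%O.
Proof. exact: (@seq_max_exists _ T^d). Qed.

Local Open Scope ring_scope.

Section Separation.
Variable R : realFieldType.
Implicit Types (A B : seq R) (s : R * R) (x : R).

Lemma hull_sub_itv A s x :
  {in A, forall a, Defs.in_itv s a} -> in_hull A x -> Defs.in_itv s x.
Proof.
move=> inA [a1 [a2 [/inA /andP [s1a1 _] /inA /andP [_ a2s2] /andP [a1x xa2]]]].
by rewrite /Defs.in_itv (le_trans s1a1 a1x) (le_trans xa2 a2s2).
Qed.

Lemma separated_hulls A B s : s.1 <= s.2 ->
  {in A, forall a, Defs.in_itv s a} -> {in B, forall b, ~~ Defs.in_itv s b} ->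
  (forall x, ~ (in_hull A x /\ in_hull B x)) \/ between_consec B A.
Proof.
move=> s12 inA outB.
have outside b : b \in B -> (b < s.1) || (s.2 < b).
  by move/outB; rewrite negb_and -!ltNge.
case: (boolP (has (fun b => b < s.1) B && has (fun b => s.2 < b) B)) => [|noboth].
  rewrite !has_filter => /andP [/seq_max_exists [m1] + Hm1 /seq_min_exists [m2] + Hm2].
  rewrite !mem_filter => /andP [m1s m1B] /andP [m2s m2B].
  right; exists m1, m2; split => //.
  - exact: lt_trans m1s (le_lt_trans s12 m2s).
  - move=> q qB /andP [m1q qm2].
    case/orP: (outside q qB) => qs.
      have /Hm1 qm1 : q \in [seq b <- B | b < s.1] by rewrite mem_filter qs.
      by move: (lt_le_trans m1q qm1); rewrite ltxx.
    have /Hm2 m2q : q \in [seq b <- B | s.2 < b] by rewrite mem_filter qs.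
    by move: (le_lt_trans m2q qm2); rewrite ltxx.
  - move=> x /(hull_sub_itv inA) /andP [s1x xs2].
    by rewrite (lt_le_trans m1s s1x) (le_lt_trans xs2 m2s).
left => x [/(hull_sub_itv inA) /andP [s1x xs2]].
case=> b1 [b2 [b1B b2B /andP [b1x xb2]]].
case/negP: noboth; apply/andP; split; apply/hasP.
- exists b1 => //=; case/orP: (outside b1 b1B) => // s2b1.
  by move: (lt_le_trans s2b1 (le_trans b1x xs2)); rewrite ltxx.
- exists b2 => //=; case/orP: (outside b2 b2B) => // b2s1.
  by move: (lt_le_trans b2s1 (le_trans s1x xb2)); rewrite ltxx.
Qed.

End Separation.

Section CodeClasses.
Variables (R : realFieldType) (P : seq R) (S : seq (R * R)).

Lemma isQ_code_class Q : isQ P S Q -> exists c, Q = code_class P S c.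
Proof. by case=> [->|[p [_ _ -> _]]]; [exists [::] | exists (code S p)]. Qed.

Lemma mem_code_class c q : q \in code_class P S c -> code S q = c.
Proof. by rewrite mem_filter => /andP [/eqP]. Qed.

Lemma code_eq_itv p q s :
  s \in S -> code S p = code S q -> Defs.in_itv s p = Defs.in_itv s q.
Proof.
move=> sS pq; have : (s \in code S p) = (s \in code S q) by rewrite pq.
by rewrite !mem_filter sS !andbT.
Qed.

Lemma code_neq_itv p q :
  code S p != code S q -> exists2 s, s \in S & Defs.in_itv s p != Defs.in_itv s q.
Proof.
move=> pq; apply/hasP; apply: contraNT pq => /hasPn same.
by apply/eqP/eq_in_filter => s /same; rewrite negbK => /eqP.
Qed.

Lemma code_classes_separated ca cb :
  code_class P S ca != code_class P S cb ->
  code_class P S ca != [::] -> code_class P S cb != [::] ->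
  exists2 s, s \in S &
    let A := code_class P S ca in let B := code_class P S cb in
    ({in A, forall a, Defs.in_itv s a} /\ {in B, forall b, ~~ Defs.in_itv s b})
    \/ ({in B, forall b, Defs.in_itv s b} /\ {in A, forall a, ~~ Defs.in_itv s a}).
Proof.
set A := code_class P S ca; set B := code_class P S cb => AB nA nB.
have [a /mem_code_class codea] : exists a, a \in A.
  by case: (A) nA => [//|a ?] _; exists a; rewrite mem_head.
have [b /mem_code_class codeb] : exists b, b \in B.
  by case: (B) nB => [//|b ?] _; exists b; rewrite mem_head.
have [|s sS sep] := @code_neq_itv a b.
  by rewrite codea codeb; apply: contraNneq AB => eq_c; rewrite /A /B eq_c.
have inA q : q \in A -> Defs.in_itv s q = Defs.in_itv s a.
  by move/mem_code_class => codeq; apply: code_eq_itv; rewrite ?codeq.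
have inB q : q \in B -> Defs.in_itv s q = Defs.in_itv s b.
  by move/mem_code_class => codeq; apply: code_eq_itv; rewrite ?codeq.
exists s => //; move: sep.
case: (Defs.in_itv s a) inA; case: (Defs.in_itv s b) inB => // inB inA _.
- by left; split=> q /[dup] ? => [/inA|/inB ->].
- by right; split=> q /[dup] ? => [/inB|/inA ->].
Qed.

End CodeClasses.

Theorem lemma2 (R : realFieldType) (P : seq R) (S : seq (R * R))
  (Hitv : forall s, s \in S -> s.1 < s.2)
  (Hend : forall s, s \in S -> (s.1 \notin P) && (s.2 \notin P))
  (Hgap : forall p q, p \in P -> q \in P -> p < q ->
            (forall r, r \in P -> ~ (p < r < q)) ->
            exists2 s, s \in S & (p < s.1 < q) \/ (p < s.2 < q))
  (Qi Qj : seq R) :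
  isQ P S Qi -> isQ P S Qj -> Qi != Qj -> Qi != [::] -> Qj != [::] ->
  (forall x, ~ (in_hull Qi x /\ in_hull Qj x))
  \/ between_consec Qi Qj \/ between_consec Qj Qi.
Proof.
move=> /isQ_code_class [ci ->] /isQ_code_class [cj ->] ij ni nj.
have [s /Hitv /ltW s12 [[inI outJ]|[inJ outI]]] := code_classes_separated ij ni nj.
- by have [disj|betw] := separated_hulls s12 inI outJ; [left | right; right].
- have [disj|betw] := separated_hulls s12 inJ outI; last by right; left.
  by left => x [hi hj]; apply: (disj x).
Qed.
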